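(* Let $M=\begin{bmatrix} r & s\\ a & b\end{bmatrix}$ be an integer matrix of rank two with $r\ge s>0$, $0<a\le b$ and $\gcd(r,s)=1$. For $\ell\in\mathbb{N}$ let $G_\ell(M)$ be the band graph of $M$. If $\ell<r+s-1$, then every connected component of $G_\ell(M)$ is finite. If $\ell\ge r+s-1$, then for every $w_0\in\{0,1,\dots,\ell\}$ there exists $z_0\in\mathbb{N}$ such that $(w_0,z_0)$ belongs to an infinite connected component of $G_\ell(M)$.
   Context: $\mathbb{N}=\{0,1,2,\dots\}$. For $Q\subseteq\mathbb{Z}^n$ and an integer $n\times m$ matrix $M$, the graph $G_Q(M)$ has vertex set $Q$, and $u,v\in Q$ are joined by an edge iff $u-v$ or $v-u$ is a column of $M$. A connected component is infinite if it has infinitely many vertices, finite otherwise. For a $2\times 2$ integer matrix $M$ with positive entries and $\ell\in\mathbb{N}$, the band graph is $G_\ell(M)=G_{Q_\ell}(M)$ with $Q_\ell=\{u\in\mathbb{N}^2\mid u_1\le \ell\}$. *)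

From Stdlib Require Import ZArith List Relations.
Open Scope Z_scope.

(* A 2x2 integer matrix M = [[r, s]; [a, b]] is given by its entries;
   its columns are (r, a) and (s, b). *)

Definition in_band (l : nat) (u : Z * Z) : Prop :=
  0 <= fst u <= Z.of_nat l /\ 0 <= snd u.

Definition is_col (r s a b : Z) (d : Z * Z) : Prop :=
  d = (r, a) \/ d = (s, b).

Definition diff (u v : Z * Z) : Z * Z := (fst u - fst v, snd u - snd v).

Definition band_edge (r s a b : Z) (l : nat) (u v : Z * Z) : Prop :=
  in_band l u /\ in_band l v /\
  (is_col r s a b (diff u v) \/ is_col r s a b (diff v u)).

Definition band_connected (r s a b : Z) (l : nat) (u v : Z * Z) : Prop :=
  in_band l u /\ clos_refl_trans _ (band_edge r s a b l) u v.

Definition component_finite (r s a b : Z) (l : nat) (u : Z * Z) : Prop :=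
  exists L : list (Z * Z), forall v, band_connected r s a b l u v -> In v L.

Definition component_infinite (r s a b : Z) (l : nat) (u : Z * Z) : Prop :=
  ~ component_finite r s a b l u.

From Stdlib Require Import ZArith List Relations Lia Znumtheory.
Open Scope Z_scope.

(* Write n = r + s. A point reached from (x0, y0) has the form
   (x0 + i r - j s, y0 + i a - j b), and modulo n its abscissa is x0 - (i + j) s.
   Since s is invertible modulo n there is a level T, with -n < T < 0, at which
   the abscissa is -1 modulo n; as each edge changes the level i + j by one,
   when l <= n - 2 the component stays strictly between the levels T and T + n,
   and together with 0 <= x <= l this leaves finitely many points.
   When l >= n - 1, orient the columns as (p, A), (q, B) with q A > p B. In the
   strip of abscissae [0, p + q - 1], stepping by +(p, A) when possible and by
   -(q, B) otherwise, one returns after p + q steps to the same abscissa, q steps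
   up and p down, having gained q A - p B > 0 in height: repeating this cycle
   from a high enough starting point climbs indefinitely. *)

Lemma band_connected_in_band (r s a b : Z) (l : nat) (u v : Z * Z) :
  clos_refl_trans _ (band_edge r s a b l) u v -> in_band l u -> in_band l v.
Proof.
  induction 1 as [u v (_ & Hv & _) | | u w v _ IH1 _ IH2]; auto.
Qed.

Lemma component_infinite_of_unbounded (r s a b : Z) (l : nat) (u : Z * Z) :
  (forall M, exists v, band_connected r s a b l u v /\ M <= snd v) ->
  component_infinite r s a b l u.
Proof.
  intros Hunb [L HL].
  assert (HM : exists M, forall v, In v L -> snd v < M).
  { clear HL; induction L as [| w L [M HM]].
    - exists 0; intros v [].
    - exists (Z.max M (snd w + 1)).
      intros v [<- | Hv]; [lia | specialize (HM v Hv); lia]. }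
  destruct HM as [M HM].
  destruct (Hunb M) as [v [Hv HMv]].
  specialize (HM v (HL v Hv)); lia.
Qed.

Definition Zrange (K : Z) : list Z :=
  map (fun k => Z.of_nat k - K) (seq 0 (Z.to_nat (2 * K + 1))).

Lemma in_Zrange (K z : Z) : -K <= z <= K -> In z (Zrange K).
Proof.
  intros Hz; apply in_map_iff; exists (Z.to_nat (z + K)); split.
  - rewrite Z2Nat.id by lia; ring.
  - apply in_seq; lia.
Qed.

Lemma finite_of_bounded_parameters (f : Z -> Z -> Z * Z) (P : Z * Z -> Prop) (K : Z) :
  (forall v, P v -> exists i t, -K <= i <= K /\ -K <= t <= K /\ v = f i t) ->
  exists L, forall v, P v -> In v L.
Proof.
  intros Hpar.
  exists (map (fun it => f (fst it) (snd it)) (list_prod (Zrange K) (Zrange K))).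
  intros v Hv; destruct (Hpar v Hv) as (i & t & Hi & Ht & ->).
  apply in_map_iff; exists (i, t); split; [reflexivity |].
  apply in_prod; apply in_Zrange; assumption.
Qed.

Lemma not_divides_succ (n x : Z) : 0 <= x <= n - 2 -> ~ (n | x + 1).
Proof. intros Hx [k Hk]; destruct (Z_le_gt_dec k 0); nia. Qed.

Lemma divides_abscissa_succ (r s x0 T i j : Z) :
  (r + s | T * s - (x0 + 1)) -> (r + s | i + j - T) ->
  (r + s | x0 + i * r - j * s + 1).
Proof.
  intros [k1 Hk1] [k2 Hk2]; exists (i - k2 * s - k1).
  (* x0 + i r - j s + 1 = i (r + s) - (i + j - T) s - (T s - (x0 + 1)) *)
  nia.
Qed.

Lemma exists_forbidden_level (r s x0 : Z) :
  0 < r -> 0 < s -> Z.gcd r s = 1 -> 0 <= x0 <= r + s - 2 ->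
  exists T, - (r + s) < T < 0 /\ (r + s | T * s - (x0 + 1)).
Proof.
  intros hr hs hgcd hx0.
  destruct (Zis_gcd_bezout r s 1) as [u v Huv].
  { rewrite <- hgcd; apply Zgcd_is_gcd. }
  set (n := r + s).
  set (T0 := (v - u) * (x0 + 1)).
  assert (HT0 : (n | T0 * s - (x0 + 1))).
  { exists (- (x0 + 1) * u); unfold T0, n; nia. }
  assert (Hdm : T0 = n * (T0 / n) + T0 mod n) by (apply Z.div_mod; lia).
  assert (Hmb : 0 <= T0 mod n < n) by (apply Z.mod_pos_bound; lia).
  assert (Hnz : T0 mod n <> 0).
  { intros H0; apply (not_divides_succ n x0); [unfold n; lia |].
    replace (x0 + 1) with (T0 * s - (T0 * s - (x0 + 1))) by ring.
    apply Z.divide_sub_r; [| exact HT0].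
    apply Z.divide_mul_l; exists (T0 / n); lia. }
  exists (T0 mod n - n); split; [unfold n in *; lia |].
  replace (T0 mod n) with (T0 - n * (T0 / n)) by lia.
  replace ((T0 - n * (T0 / n) - n) * s - (x0 + 1))
    with ((T0 * s - (x0 + 1)) - n * ((T0 / n + 1) * s)) by ring.
  apply Z.divide_sub_r; [exact HT0 | apply Z.divide_factor_l].
Qed.

Section NarrowBand.

Variables (r s a b : Z) (l : nat) (x0 y0 T : Z).
Hypotheses (hr : 0 < r) (hs : 0 < s) (hl : Z.of_nat l <= r + s - 2)
  (hx0 : 0 <= x0 <= Z.of_nat l)
  (hT : - (r + s) < T < 0) (hTs : (r + s | T * s - (x0 + 1))).

Definition level_window (v : Z * Z) : Prop :=
  exists i j, T < i + j < T + (r + s) /\ v = (x0 + i * r - j * s, y0 + i * a - j * b).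

Lemma level_window_closed (i j : Z) (v : Z * Z) :
  T <= i + j <= T + (r + s) -> v = (x0 + i * r - j * s, y0 + i * a - j * b) ->
  in_band l v -> level_window v.
Proof.
  intros Hij Hv Hband; exists i, j; split; [| exact Hv].
  assert (Hforbidden : ~ (r + s | i + j - T)).
  { intros Hdiv; apply (not_divides_succ (r + s) (x0 + i * r - j * s)).
    - subst v; destruct Hband as [Hx _]; simpl in Hx; lia.
    - exact (divides_abscissa_succ r s x0 T i j hTs Hdiv). }
  destruct (Z.eq_dec (i + j) T) as [E | NE].
  { exfalso; apply Hforbidden; exists 0; lia. }
  destruct (Z.eq_dec (i + j) (T + (r + s))) as [E' | NE'].
  { exfalso; apply Hforbidden; exists 1; lia. }
  lia.
Qed.

Lemma level_window_step (u v : Z * Z) :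
  band_edge r s a b l u v -> level_window u -> level_window v.
Proof.
  destruct v as [x y]; intros (_ & Hv & Hcol) (i & j & Hij & ->).
  unfold is_col, diff in Hcol; simpl in Hcol.
  destruct Hcol as [[Hd | Hd] | [Hd | Hd]]; injection Hd as Hx Hy.
  - apply (level_window_closed (i - 1) j); [lia | f_equal; lia | exact Hv].
  - apply (level_window_closed i (j + 1)); [lia | f_equal; lia | exact Hv].
  - apply (level_window_closed (i + 1) j); [lia | f_equal; lia | exact Hv].
  - apply (level_window_closed i (j - 1)); [lia | f_equal; lia | exact Hv].
Qed.

Lemma level_window_reach (u v : Z * Z) :
  clos_refl_trans _ (band_edge r s a b l) u v -> level_window u -> level_window v.
Proof.
  induction 1 as [u v Huv | | u w v _ IH1 _ IH2]; auto.
  apply (level_window_step u v Huv).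
Qed.

Lemma level_window_bounded (v : Z * Z) :
  level_window v -> in_band l v ->
  exists i t, - (r + s) <= i <= r + s /\ - (r + s) <= t <= r + s /\
    v = (x0 + i * r - (t - i) * s, y0 + i * a - (t - i) * b).
Proof.
  intros (i & j & Hij & ->) [Hx _]; simpl in Hx.
  exists i, (i + j); repeat split; try lia.
  - nia.
  - nia.
  - f_equal; ring.
Qed.

Lemma component_finite_narrow : component_finite r s a b l (x0, y0).
Proof.
  apply (finite_of_bounded_parameters
           (fun i t => (x0 + i * r - (t - i) * s, y0 + i * a - (t - i) * b)) _ (r + s)).
  intros v [Hband Hreach].
  apply level_window_bounded.
  - apply (level_window_reach _ _ Hreach); exists 0, 0; split; [lia | f_equal; ring].
  - exact (band_connected_in_band _ _ _ _ _ _ _ Hreach Hband).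
Qed.

End NarrowBand.

Lemma component_finite_below (r s a b : Z) (l : nat) (u : Z * Z) :
  0 < r -> 0 < s -> Z.gcd r s = 1 -> Z.of_nat l < r + s - 1 -> in_band l u ->
  component_finite r s a b l u.
Proof.
  destruct u as [x0 y0]; intros hr hs hgcd hl [Hx _]; simpl in Hx.
  destruct (exists_forbidden_level r s x0) as (T & hT & hTs); try lia.
  apply (component_finite_narrow r s a b l x0 y0 T); lia || assumption.
Qed.

Section WideBand.

Variables (p q A B : Z) (l : nat).
Hypotheses (hp : 0 < p) (hq : 0 < q) (hA : 0 < A) (hB : 0 < B)
  (hl : p + q - 1 <= Z.of_nat l) (hdet : p * B < q * A).

Local Notation reach := (clos_refl_trans _ (band_edge p q A B l)).

Lemma up_edge (x y : Z) :
  0 <= x -> x + p <= Z.of_nat l -> 0 <= y -> band_edge p q A B l (x, y) (x + p, y + A).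
Proof.
  intros; unfold band_edge, in_band, is_col, diff; simpl.
  split; [lia | split; [lia |]]; right; left; f_equal; ring.
Qed.

Lemma down_edge (x y : Z) :
  q <= x <= Z.of_nat l -> B <= y -> band_edge p q A B l (x, y) (x - q, y - B).
Proof.
  intros; unfold band_edge, in_band, is_col, diff; simpl.
  split; [lia | split; [lia |]]; left; right; f_equal; ring.
Qed.

Lemma greedy_walk (x y : Z) (k : nat) :
  0 <= x <= p + q - 1 -> (p + q) * B <= y -> Z.of_nat k <= p + q ->
  exists U D, 0 <= U /\ 0 <= D /\ U + D = Z.of_nat k /\
    0 <= x + U * p - D * q <= p + q - 1 /\
    reach (x, y) (x + U * p - D * q, y + U * A - D * B).
Proof.
  intros Hx Hy; induction k as [| k IH]; intros Hk.
  - exists 0, 0; repeat split; try lia.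
    replace (x + 0 * p - 0 * q, y + 0 * A - 0 * B) with (x, y) by (f_equal; ring).
    apply rt_refl.
  - destruct IH as (U & D & HU & HD & HUD & Hwin & Hreach); [lia |].
    destruct (Z_le_gt_dec (x + U * p - D * q + p) (p + q - 1)).
    + exists (U + 1), D; repeat split; try lia.
      eapply rt_trans; [exact Hreach |]; apply rt_step.
      replace (x + (U + 1) * p - D * q, y + (U + 1) * A - D * B)
        with (x + U * p - D * q + p, y + U * A - D * B + A) by (f_equal; ring).
      apply up_edge; nia.
    + exists U, (D + 1); repeat split; try lia.
      eapply rt_trans; [exact Hreach |]; apply rt_step.
      replace (x + U * p - (D + 1) * q, y + U * A - (D + 1) * B)
        with (x + U * p - D * q - q, y + U * A - D * B - B) by (f_equal; ring).
      apply down_edge; nia.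
Qed.

Lemma greedy_cycle (x y : Z) :
  0 <= x <= p + q - 1 -> (p + q) * B <= y -> reach (x, y) (x, y + (q * A - p * B)).
Proof.
  intros Hx Hy.
  destruct (greedy_walk x y (Z.to_nat (p + q)) Hx Hy) as (U & D & _ & _ & HUD & Hwin & Hreach);
    [lia |].
  rewrite Z2Nat.id in HUD by lia.
  (* the displacement U p - D q equals (p + q) (U - q) and lies strictly between -(p + q) and p + q *)
  assert (HU : U = q).
  { assert (Hmul : - (p + q) < (p + q) * (U - q) < p + q) by nia.
    destruct (Z.lt_trichotomy (U - q) 0) as [Hlt | [Heq | Hgt]]; nia. }
  replace (x, y + (q * A - p * B)) with (x + U * p - D * q, y + U * A - D * B)
    by (f_equal; nia).
  exact Hreach.
Qed.

Lemma greedy_pump (x y : Z) (k : nat) :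
  0 <= x <= p + q - 1 -> (p + q) * B <= y ->
  reach (x, y) (x, y + Z.of_nat k * (q * A - p * B)).
Proof.
  intros Hx Hy; induction k as [| k IH].
  - replace (y + Z.of_nat 0 * (q * A - p * B)) with y by (simpl; ring); apply rt_refl.
  - eapply rt_trans; [exact IH |].
    replace (y + Z.of_nat (S k) * (q * A - p * B))
      with (y + Z.of_nat k * (q * A - p * B) + (q * A - p * B)) by lia.
    apply greedy_cycle; nia.
Qed.

Lemma descend_to_strip (N : nat) (x y : Z) :
  0 <= x <= Z.of_nat N -> x <= Z.of_nat l -> (x + p + q) * B <= y ->
  exists x' y', 0 <= x' <= p + q - 1 /\ (p + q) * B <= y' /\ reach (x, y) (x', y').
Proof.
  revert x y; induction N as [| N IH]; intros x y Hx Hxl Hy.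
  - exists x, y; split; [lia | split; [nia | apply rt_refl]].
  - destruct (Z_le_gt_dec x (p + q - 1)).
    + exists x, y; split; [lia | split; [nia | apply rt_refl]].
    + destruct (IH (x - q) (y - B)) as (x' & y' & Hx' & Hy' & Hreach); try lia; [nia |].
      exists x', y'; repeat split; try lia.
      eapply rt_trans; [apply rt_step, down_edge; nia | exact Hreach].
Qed.

Lemma infinite_component_above (w0 : Z) :
  0 <= w0 <= Z.of_nat l -> component_infinite p q A B l (w0, (w0 + p + q) * B).
Proof.
  intros Hw; apply component_infinite_of_unbounded; intros M.
  destruct (descend_to_strip (Z.to_nat w0) w0 ((w0 + p + q) * B))
    as (x' & y' & Hx' & Hy' & Hreach); try lia.
  exists (x', y' + Z.of_nat (Z.to_nat (Z.abs M)) * (q * A - p * B)); split.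
  - split; [unfold in_band; simpl; nia |].
    eapply rt_trans; [exact Hreach | apply greedy_pump; assumption].
  - simpl; rewrite Z2Nat.id by lia; nia.
Qed.

End WideBand.

Lemma band_connected_swap (r s a b : Z) (l : nat) (u v : Z * Z) :
  band_connected s r b a l u v -> band_connected r s a b l u v.
Proof.
  intros [Hu Hreach]; split; [exact Hu |]; clear Hu.
  induction Hreach as [u v (Hu & Hv & Hcol) | | u w v _ IH1 _ IH2].
  - apply rt_step; split; [exact Hu | split; [exact Hv |]].
    unfold is_col in *; tauto.
  - apply rt_refl.
  - exact (rt_trans _ _ u w v IH1 IH2).
Qed.

Lemma infinite_component_wide (r s a b : Z) (l : nat) (w0 : Z) :
  r * b - s * a <> 0 -> 0 < r -> 0 < s -> 0 < a -> 0 < b ->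
  r + s - 1 <= Z.of_nat l -> 0 <= w0 <= Z.of_nat l ->
  exists z0, 0 <= z0 /\ component_infinite r s a b l (w0, z0).
Proof.
  intros Hdet hr hs ha hb hl Hw.
  destruct (Z_lt_ge_dec (r * b) (s * a)).
  - exists ((w0 + r + s) * b); split; [nia |].
    apply infinite_component_above; lia.
  - exists ((w0 + s + r) * a); split; [nia |].
    intros [L HL]; apply (infinite_component_above s r b a l) with (w0 := w0); try lia.
    exists L; intros v Hv; apply HL, band_connected_swap, Hv.
Qed.

Theorem proposition2p5 (r s a b : Z) :
  r * b - s * a <> 0 ->
  r >= s -> s > 0 -> 0 < a -> a <= b -> Z.gcd r s = 1 ->
  (forall l : nat, Z.of_nat l < r + s - 1 ->
     forall u : Z * Z, in_band l u -> component_finite r s a b l u) /\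
  (forall l : nat, Z.of_nat l >= r + s - 1 ->
     forall w0 : Z, 0 <= w0 <= Z.of_nat l ->
       exists z0 : Z, 0 <= z0 /\ component_infinite r s a b l (w0, z0)).
Proof.
  intros Hdet Hrs hs ha hab hgcd; split.
  - intros l hl u Hu; apply component_finite_below; auto; lia.
  - intros l hl w0 Hw; apply infinite_component_wide; auto; lia.
Qed.
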